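(* Let $d\ge 3$. If $w$ is a nonempty word over the alphabet $A=\{a_1,\dots,a_d\}$ (positive letters only, no inverses), then $w$ does not represent the identity element of $G_d$.
   Context: Let $d\ge 3$, $X=\{1,\dots,d\}$, $T$ the $d$-regular rooted tree with vertex set $X^*$. $\mathrm{Aut}(T)$ is the group of root-preserving automorphisms with product left-to-right: $(gh)(u)=h(g(u))$. Sections $g|_u$ are defined by $g(uv)=g(u)\,g|_u(v)$; we write $g=(g|_1,\dots,g|_d)\lambda_g$ with $\lambda_g\in S_d$ the action on the first level; $e$ is the identity; $\overline{j}\in\{1,\dots,d\}$ denotes $j$ mod $d$. $G_d=\langle a_1,\dots,a_d\rangle\le\mathrm{Aut}(T)$ where $a_i$ acts on the first level as $(i\ \overline{i+1})$, with $a_i|_i=a_i$, $a_i|_{\overline{i+1}}=a_{\overline{i+1}}$, and $a_i|_x=e$ otherwise. *)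

From mathcomp Require Import all_boot.
Set Implicit Arguments. Unset Strict Implicit. Unset Printing Implicit Defensive.

(* Alphabet X = {1,...,d} is represented by 'I_d = {0,...,d-1}
   (letter j+1 of the paper <-> ordinal j); the cyclic successor
   j |-> \overline{j+1} is ordS.  Vertices of the d-regular rooted tree T
   are words over X, i.e. seq 'I_d. *)

(* Action of the generator a_i on vertices, defined by the wreath recursion
   a_i = (a_i|_1,...,a_i|_d) (i  i+1) with a_i|_i = a_i,
   a_i|_{i+1} = a_{i+1}, and a_i|_x = e otherwise:
     a_i (i v)     = (i+1) a_i(v)
     a_i ((i+1) v) = i a_{i+1}(v)
     a_i (x v)     = x v            otherwise. *)
Fixpoint gen_act (d : nat) (i : 'I_d) (u : seq 'I_d) : seq 'I_d :=
  match u with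
  | [::] => [::]
  | x :: v =>
      if x == i then ordS i :: gen_act i v
      else if x == ordS i then i :: gen_act (ordS i) v
      else x :: v
  end.

(* A word w = a_{i1} a_{i2} ... a_{ik} (positive letters), read as an element
   of Aut(T) with the left-to-right product (gh)(u) = h(g(u)): apply a_{i1}
   first, then a_{i2}, ... *)
Definition word_act (d : nat) (w : seq 'I_d) (u : seq 'I_d) : seq 'I_d :=
  foldl (fun v i => gen_act i v) u w.

Definition represents_identity (d : nat) (w : seq 'I_d) : Prop :=
  forall u : seq 'I_d, word_act w u = u.

From mathcomp Require Import all_boot zify.

Set Implicit Arguments.
Unset Strict Implicit.

(** A word [w] acts on a vertex [x :: v] by moving the first letter to
    [word_perm w x] and acting on [v] by the section [word_section w x], which is
    again a positive word, no longer than [w]. Take a shortest nonempty word [w]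
    representing the identity. Its sections also represent the identity, so each
    of them is either empty or as long as [w]. Following the sections at [i] and
    at [i+1] (for [w] starting with [a_i]) shows that both have full length
    only if [w] starts with [a_i a_i], because for [d >= 3] the points [i],
    [i+1], [i+2] are distinct. But then the
    section of [w] at [i] starts with [a_i a_(i+1)], contradicting the same fact
    for that section. *)

Section WordSections.
Variable d : nat.
Implicit Types (i x : 'I_d) (w : seq 'I_d).

Definition gen_perm i x : 'I_d :=
  if x == i then ordS i else if x == ordS i then i else x.

Definition gen_section i x : seq 'I_d :=
  if x == i then [:: i] else if x == ordS i then [:: ordS i] else [::].

Fixpoint word_perm w x : 'I_d :=
  if w is i :: w' then word_perm w' (gen_perm i x) else x.

Fixpoint word_section w x : seq 'I_d :=
  if w is i :: w' then gen_section i x ++ word_section w' (gen_perm i x)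
  else [::].

Lemma word_act_cat (s t u : seq 'I_d) :
  word_act (s ++ t) u = word_act t (word_act s u).
Proof. by rewrite /word_act foldl_cat. Qed.

Lemma gen_act_cons i x (v : seq 'I_d) :
  gen_act i (x :: v) = gen_perm i x :: word_act (gen_section i x) v.
Proof. by rewrite /= /gen_perm /gen_section; case: (x == i); case: (x == ordS i). Qed.

Lemma word_act_cons w x (v : seq 'I_d) :
  word_act w (x :: v) = word_perm w x :: word_act (word_section w x) v.
Proof.
elim: w x v => [|i w IHw] x v //.
rewrite -[word_act (i :: w) _]/(word_act w (gen_act i (x :: v))).
by rewrite gen_act_cons IHw -word_act_cat.
Qed.

Lemma represents_identity_section w x :
  represents_identity w -> represents_identity (word_section w x).
Proof. by move=> idw v; have := idw (x :: v); rewrite word_act_cons => -[]. Qed.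

Lemma size_gen_section i x : size (gen_section i x) = ((x == i) || (x == ordS i)).
Proof. by rewrite /gen_section; case: (x == i); case: (x == ordS i). Qed.

Lemma size_word_section w x : size (word_section w x) <= size w.
Proof.
elim: w x => [|i w IHw] x //=.
by rewrite size_cat size_gen_section -add1n leq_add ?leq_b1.
Qed.

Lemma full_section_cons i w x :
  size (word_section (i :: w) x) = (size w).+1 ->
  ((x == i) || (x == ordS i)) /\ size (word_section w (gen_perm i x)) = size w.
Proof.
rewrite /= size_cat size_gen_section.
by have := size_word_section w (gen_perm i x); case: (_ || _) => /=; lia.
Qed.

Lemma val_ordS i : nat_of_ord (ordS i) = if i.+1 == d then 0 else i.+1.
Proof.
rewrite /=; case: eqP => [->|]; first exact: modnn.
by have := ltn_ord i; rewrite leq_eqVlt => /orP [/eqP //|/modn_small].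
Qed.

Lemma ordS_neq : 1 < d -> forall i, ordS i != i.
Proof.
move=> d_gt1 i; apply/eqP => /(congr1 (@nat_of_ord d)).
by rewrite val_ordS; case: eqP; lia.
Qed.

Hypothesis d_ge3 : 3 <= d.
Let d_gt1 : 1 < d := ltnW d_ge3.

Lemma ordS2_neq i : ordS (ordS i) != i.
Proof.
apply/eqP => /(congr1 (@nat_of_ord d)); rewrite !val_ordS.
by have := ltn_ord i; do 2 case: eqP; rewrite ?val_ordS; lia.
Qed.

Lemma full_sections_head_eq i j w :
  size (word_section [:: i, j & w] i) = (size w).+2 ->
  size (word_section [:: i, j & w] (ordS i)) = (size w).+2 -> j = i.
Proof.
move=> /full_section_cons [_]; rewrite /gen_perm eqxx => /full_section_cons [Si _].
move=> /full_section_cons [_]; rewrite /gen_perm (negbTE (ordS_neq d_gt1 i)) eqxx.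
move=> /full_section_cons [] /orP [/eqP -> //|/eqP ij] _.
move: Si => /orP [/eqP ji|/eqP /ordS_inj -> //].
by move: (ordS2_neq j); rewrite -ij ji eqxx.
Qed.

Section ShortestIdentity.
Variable w : seq 'I_d.
Hypothesis w_shortest :
  forall v : seq 'I_d, 0 < size v < size w -> ~ represents_identity v.

Lemma shortest_identity_full_section x :
  represents_identity w -> word_section w x != [::] ->
  size (word_section w x) = size w.
Proof.
move=> idw sec_nonempty; apply/eqP; rewrite eqn_leq size_word_section leqNgt.
apply/negP => sec_short.
move: (represents_identity_section x idw); apply: w_shortest.
by rewrite sec_short andbT lt0n size_eq0.
Qed.

Lemma shortest_identity_head :
  represents_identity w -> w != [::] -> exists i w', w = [:: i, i & w'].
Proof.
move=> idw; case E: w => [//|i [|j w']] _.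
  have := idw [:: i]; rewrite E /= eqxx => -[] /eqP.
  by rewrite (negbTE (ordS_neq d_gt1 i)).
exists i, w'; congr [:: _, _ & _].
have full_sec x : word_section w x != [::] -> size (word_section w x) = (size w').+2.
  by move=> sec_nonempty; rewrite shortest_identity_full_section // E.
apply: (full_sections_head_eq (w := w')); rewrite -E full_sec // E /=.
- by rewrite /gen_section eqxx.
- by rewrite /gen_section (negbTE (ordS_neq d_gt1 i)) eqxx.
Qed.

End ShortestIdentity.
End WordSections.

Theorem theorem3p8 (d : nat) (hd : 3 <= d) (w : seq 'I_d) :
  w != [::] -> ~ represents_identity w.
Proof.
have [n] := ubnP (size w); elim: n w => // n IHn w /ltnSE size_w w_nil idw.
have w_shortest (v : seq 'I_d) : 0 < size v < size w -> ~ represents_identity v.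
  move=> /andP [v_pos v_short]; apply: IHn; [lia | by rewrite -size_eq0 -lt0n].
have [i [w' Ew]] := shortest_identity_head hd w_shortest idw w_nil.
have sec_nonempty : word_section w i != [::] by rewrite Ew /= /gen_section eqxx.
have sec_shortest (v : seq 'I_d) :
    0 < size v < size (word_section w i) -> ~ represents_identity v.
  by rewrite (shortest_identity_full_section w_shortest idw sec_nonempty); apply: w_shortest.
have [k [v]] := shortest_identity_head hd sec_shortest
  (represents_identity_section i idw) sec_nonempty.
rewrite Ew /= /gen_section /gen_perm eqxx (negbTE (ordS_neq (ltnW hd) i)) eqxx /=.
by case=> <- /eqP; rewrite (negbTE (ordS_neq (ltnW hd) i)).
Qed.
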